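(* Let $a\in(-\infty,1)$ and $\omega\in\mathbb D_a$. Then for every $x>0$, $$\frac{\eta_a}{\pi}\le r(\omega)\le\min\left\{\frac{2(x+1)}{\pi x}(1-\omega(x))^{1/2},\ \frac2\pi\right\}.$$
   Context: Let $\rho(x)=(1+|x|)^{-1/2}$ and $\eta_a=\frac{1}{2^{9/2}(4+|a|)^3}$. $\mathbb D_a$ is the set of continuous even functions $\omega$ on $\mathbb R$ with $\|\rho\omega\|_{L^\infty}<\infty$ such that $\omega(0)=1$; $(1-x^2)_+\le\omega(x)\le1$ for all $x$; $\omega$ is non-increasing on $[0,\infty)$; $s\mapsto\omega(\sqrt s)$ is convex on $[0,\infty)$; and the left derivative satisfies $\omega'_-(1/2)\le-\eta_a$. $r(\omega)=\frac1\pi\int_0^\infty\frac{\omega(0)-\omega(y)}{y^2}\,dy$. *)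

From Stdlib Require Import Reals Lra.
From Coquelicot Require Import Coquelicot.
Open Scope R_scope.

Definition rho (x : R) : R := / sqrt (1 + Rabs x).

Definition eta (a : R) : R := / (Rpower 2 (9/2) * (4 + Rabs a) ^ 3).

Definition in_D (a : R) (w : R -> R) : Prop :=
  (forall x, continuity_pt w x) /\
  (forall x, w (- x) = w x) /\
  (exists M, forall x, Rabs (rho x * w x) <= M) /\
  w 0 = 1 /\
  (forall x, Rmax 0 (1 - x ^ 2) <= w x /\ w x <= 1) /\
  (forall x y, 0 <= x -> x <= y -> w y <= w x) /\
  (forall s t l, 0 <= s -> 0 <= t -> 0 <= l <= 1 ->
     w (sqrt (l * s + (1 - l) * t)) <= l * w (sqrt s) + (1 - l) * w (sqrt t)) /\
  (exists L, filterlim (fun h => (w (/2) - w (/2 - h)) / h) (at_right 0) (locally L)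
             /\ L <= - eta a).

Definition r (w : R -> R) : R :=
  / PI * RInt_gen (fun y => (w 0 - w y) / y ^ 2) (at_point 0) (Rbar_locally p_infty).

From Stdlib Require Import Reals Lra Classical_Prop.
From Coquelicot Require Import Coquelicot.
Open Scope R_scope.

(* The integrand f y = (w 0 - w y) / y^2 of r(w) is the chord slope of the
   convex function s |-> w (sqrt s) between 0 and y^2 (up to sign), hence it is
   nonincreasing, while y^2 f y = w 0 - w y is nondecreasing; also
   0 <= f <= min (1, 1/y^2).  Lower bound: convexity bounds f at 1/2 from below
   by minus the left derivative of w at 1/2, which is at least eta_a, and
   f >= f(1/2) on (0, 1/2], f y >= f(1/2) / (4 y^2) beyond, so the integral is
   at least f(1/2).  Upper bound: with d = 1 - w x and t = sqrt d, bound f by 1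
   on (0, t), by d / y^2 on (t, x), by f x = d / x^2 on (x, x/t) and by 1/y^2
   beyond; the integral of 1 and 1/y^2 around 1 gives the bound 2. *)

Lemma ball_Rabs (x e y : R) : ball x e y <-> Rabs (y - x) < e.
Proof. reflexivity. Qed.

Lemma is_RInt_inv_sqr (c a b : R) : 0 < a -> a <= b ->
  is_RInt (fun y => c / y ^ 2) a b (c / a - c / b).
Proof.
  intros ha hab.
  replace (c / a - c / b) with (minus ((fun y => - c / y) b) ((fun y => - c / y) a))
    by (unfold minus, plus, opp; simpl; field; lra).
  apply (is_RInt_derive (V := R_CompleteNormedModule)).
  - intros y hy. rewrite Rmin_left, Rmax_right in hy by lra.
    auto_derive; [lra | field; lra].
  - intros y hy. rewrite Rmin_left, Rmax_right in hy by lra.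
    apply continuity_pt_filterlim, continuity_pt_div.
    + apply continuity_pt_const. intros ? ?; reflexivity.
    + apply derivable_continuous_pt, derivable_pt_pow.
    + apply pow_nonzero; lra.
Qed.

Lemma RInt_le_is_RInt (f g : R -> R) (a b v : R) : a <= b -> ex_RInt f a b ->
  is_RInt g a b v -> (forall y, a < y < b -> f y <= g y) -> RInt f a b <= v.
Proof.
  intros hab hf hg H. apply is_RInt_le with f g a b; auto.
  apply (RInt_correct (V := R_CompleteNormedModule)); auto.
Qed.

Lemma RInt_ge_is_RInt (f g : R -> R) (a b v : R) : a <= b -> ex_RInt f a b ->
  is_RInt g a b v -> (forall y, a < y < b -> g y <= f y) -> v <= RInt f a b.
Proof.
  intros hab hf hg H. apply is_RInt_le with g f a b; auto.
  apply (RInt_correct (V := R_CompleteNormedModule)); auto.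
Qed.

Lemma Rle_of_sub_div_le (c k l b0 : R) : 0 < b0 -> 0 <= k ->
  (forall b, b0 <= b -> c - k / b <= l) -> c <= l.
Proof.
  intros hb0 hk H. apply Rnot_lt_le. intros hlc.
  set (b := b0 + k / (c - l)).
  assert (hkb : 0 <= k / (c - l)) by (apply Rdiv_le_0_compat; lra).
  assert (Hb := H b ltac:(unfold b; lra)).
  assert (hbpos : 0 < b) by (unfold b; lra).
  assert (k / b * b = k) by (field; lra).
  assert (k / (c - l) * (c - l) = k) by (field; lra).
  unfold b in *. nra.
Qed.

(* The value at 0 is irrelevant: on [0, b] the function agrees a.e. with its extension by its supremum, which is its right limit at 0 and makes it continuous. *)
Lemma ex_RInt_nonincr (f : R -> R) (M : R) :
  (forall y, 0 < y -> continuous f y) ->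
  (forall y1 y2, 0 < y1 -> y1 <= y2 -> f y2 <= f y1) ->
  (forall y, 0 < y -> f y <= M) ->
  forall b, 0 <= b -> ex_RInt f 0 b.
Proof.
  intros Hcont Hnon HM b hb.
  set (E := fun v => exists y, 0 < y /\ v = f y).
  destruct (completeness E) as [L [HL1 HL2]].
  { exists M. intros v [y [hy ->]]. auto. }
  { exists (f 1), 1. split; [lra | reflexivity]. }
  set (g := fun y => if Rle_dec y 0 then L else f y).
  apply ex_RInt_ext with g.
  { intros y hy. rewrite Rmin_left, Rmax_right in hy by lra.
    unfold g. destruct (Rle_dec y 0); [lra | reflexivity]. }
  apply (ex_RInt_continuous (V := R_CompleteNormedModule)). intros z hz.
  rewrite Rmin_left, Rmax_right in hz by lra.
  destruct (Rle_lt_or_eq_dec 0 z (proj1 hz)) as [hz0 | <-].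
  - apply continuous_ext_loc with f; [|apply Hcont; lra].
    exists (mkposreal z hz0). intros y hy. apply (proj1 (ball_Rabs _ _ _)) in hy. simpl in hy.
    unfold g. destruct (Rle_dec y 0); [|reflexivity].
    rewrite Rabs_minus_sym in hy. pose proof (Rle_abs (z - y)). lra.
  - apply filterlim_locally. intros eps.
    assert (Hnear : exists y0, 0 < y0 /\ L - eps < f y0).
    { apply NNPP. intros Hn.
      assert (HLe := HL2 (L - eps)). pose proof (cond_pos eps).
      enough (Hub : is_upper_bound E (L - eps)) by (specialize (HLe Hub); lra).
      intros v [y [hy ->]]. apply Rnot_lt_le. intros Hc. apply Hn. exists y. auto. }
    destruct Hnear as [y0 [hy0 Hy0]].
    exists (mkposreal y0 hy0). intros y hy. apply (proj1 (ball_Rabs _ _ _)) in hy. simpl in hy.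
    apply ball_Rabs. unfold g. destruct (Rle_dec 0 0) as [_ | ]; [|lra].
    destruct (Rle_dec y 0).
    + rewrite Rminus_eq_0, Rabs_R0. apply cond_pos.
    + rewrite Rminus_0_r in hy. pose proof (Rle_abs y).
      pose proof (Hnon y y0 ltac:(lra) ltac:(lra)).
      assert (f y <= L) by (apply HL1; exists y; split; [lra | reflexivity]).
      rewrite Rabs_left1 by lra. lra.
Qed.

Section NonnegImproperIntegral.

Variable f : R -> R.
Hypothesis f_ge0 : forall y, 0 < y -> 0 <= f y.
Hypothesis f_int : forall b, 0 <= b -> ex_RInt f 0 b.

Lemma ex_RInt_nonneg_interval (a b : R) : 0 <= a -> a <= b -> ex_RInt f a b.
Proof.
  intros ha hab. apply (ex_RInt_Chasles_2 (V := R_CompleteNormedModule)) with 0;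
    [lra | apply f_int; lra].
Qed.

Lemma RInt_Chasles_nonneg (a b c : R) : 0 <= a -> a <= b -> b <= c ->
  RInt f a c = RInt f a b + RInt f b c.
Proof.
  intros ha hab hbc. symmetry.
  apply (RInt_Chasles (V := R_CompleteNormedModule));
    apply ex_RInt_nonneg_interval; lra.
Qed.

Lemma RInt_0_nondecreasing (b1 b2 : R) : 0 <= b1 -> b1 <= b2 ->
  RInt f 0 b1 <= RInt f 0 b2.
Proof.
  intros h1 h2. rewrite (RInt_Chasles_nonneg 0 b1 b2) by lra.
  enough (0 <= RInt f b1 b2) by lra.
  apply RInt_ge_0; [lra | apply ex_RInt_nonneg_interval; lra |].
  intros y hy. apply f_ge0. lra.
Qed.

Variable M : R.
Hypothesis RInt_0_le_M : forall b, 0 <= b -> RInt f 0 b <= M.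

Lemma RInt_gen_nonneg_lub :
  is_lub (fun v => exists b, 0 <= b /\ v = RInt f 0 b)
         (RInt_gen f (at_point 0) (Rbar_locally p_infty)).
Proof.
  set (E := fun v => exists b, 0 <= b /\ v = RInt f 0 b).
  destruct (completeness E) as [l [Hl1 Hl2]].
  { exists M. intros v [b [hb ->]]. auto. }
  { exists (RInt f 0 0), 0. split; [lra | reflexivity]. }
  enough (is_RInt_gen f (at_point 0) (Rbar_locally p_infty) l) as Hgen
    by (rewrite (is_RInt_gen_unique f l Hgen); split; assumption).
  intros P [eps HP].
  assert (Hnear : exists b0, 0 <= b0 /\ l - eps < RInt f 0 b0).
  { apply NNPP. intros Hn.
    assert (Hle := Hl2 (l - eps)). pose proof (cond_pos eps).
    enough (Hub : is_upper_bound E (l - eps)) by (specialize (Hle Hub); lra).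
    intros v [b [hb ->]]. apply Rnot_lt_le. intros Hc. apply Hn. exists b. auto. }
  destruct Hnear as [b0 [hb0 Hb0]].
  apply Filter_prod with (fun y => y = 0) (fun y => b0 < y); [reflexivity | now exists b0 |].
  intros u v -> hv. exists (RInt f 0 v). split.
  - apply (RInt_correct (V := R_CompleteNormedModule)), f_int. lra.
  - apply HP, ball_Rabs.
    pose proof (RInt_0_nondecreasing b0 v hb0 ltac:(lra)).
    assert (RInt f 0 v <= l) by (apply Hl1; exists v; split; [lra | reflexivity]).
    rewrite Rabs_left1 by lra. lra.
Qed.

Lemma RInt_le_RInt_gen (b : R) : 0 <= b ->
  RInt f 0 b <= RInt_gen f (at_point 0) (Rbar_locally p_infty).
Proof.
  intros hb. apply (proj1 RInt_gen_nonneg_lub). exists b. split; [lra | reflexivity].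
Qed.

Lemma RInt_gen_le (B b0 : R) : 0 <= b0 ->
  (forall b, b0 <= b -> RInt f 0 b <= B) ->
  RInt_gen f (at_point 0) (Rbar_locally p_infty) <= B.
Proof.
  intros hb0 HB. apply (proj2 RInt_gen_nonneg_lub). intros v [b [hb ->]].
  destruct (Rle_dec b0 b); [apply HB; lra|].
  apply Rle_trans with (RInt f 0 b0); [apply RInt_0_nondecreasing | apply HB]; lra.
Qed.

End NonnegImproperIntegral.

Section MonotoneProfile.

Variable f : R -> R.
Hypothesis f_ge0 : forall y, 0 < y -> 0 <= f y.
Hypothesis f_le1 : forall y, 0 < y -> f y <= 1.
Hypothesis f_le_inv_sqr : forall y, 0 < y -> f y <= 1 / y ^ 2.
Hypothesis f_nonincr : forall y1 y2, 0 < y1 -> y1 <= y2 -> f y2 <= f y1.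
Hypothesis sqr_mul_nondecr :
  forall y1 y2, 0 < y1 -> y1 <= y2 -> y1 ^ 2 * f y1 <= y2 ^ 2 * f y2.
Hypothesis f_int : forall b, 0 <= b -> ex_RInt f 0 b.

Let RInt_split := RInt_Chasles_nonneg f f_int.
Let ex_RInt_sub := ex_RInt_nonneg_interval f f_int.

Lemma pos_of_pos_at (p x : R) : 0 < p -> 0 < f p -> 0 < x -> 0 < f x.
Proof.
  intros hp hfp hx. destruct (Rle_dec x p) as [hxp | hxp].
  - pose proof (f_nonincr x p hx hxp). lra.
  - pose proof (sqr_mul_nondecr p x hp ltac:(lra)).
    assert (0 < p ^ 2 * f p) by (apply Rmult_lt_0_compat; [apply pow_lt|]; lra).
    nra.
Qed.

Lemma RInt_0_le_2 (b : R) : 0 <= b -> RInt f 0 b <= 2.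
Proof.
  intros hb.
  enough (H1 : forall b, 1 <= b -> RInt f 0 b <= 2).
  { destruct (Rle_dec 1 b); [auto|].
    apply Rle_trans with (RInt f 0 1); [apply RInt_0_nondecreasing | apply H1]; auto; lra. }
  clear b hb. intros b hb. rewrite (RInt_split 0 1 b) by lra.
  assert (RInt f 0 1 <= (1 - 0) * 1).
  { apply (RInt_le_is_RInt f (fun _ => 1)); [lra | apply ex_RInt_sub; lra | exact (is_RInt_const 0 1 1) |].
    intros y hy. apply f_le1. lra. }
  assert (RInt f 1 b <= 1 / 1 - 1 / b).
  { apply RInt_le_is_RInt with (fun y => 1 / y ^ 2);
      [lra | apply ex_RInt_sub; lra | apply is_RInt_inv_sqr; lra |].
    intros y hy. apply f_le_inv_sqr. lra. }
  assert (0 < 1 / b) by (apply Rdiv_lt_0_compat; lra).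
  lra.
Qed.

Lemma RInt_gen_le_2 : RInt_gen f (at_point 0) (Rbar_locally p_infty) <= 2.
Proof.
  apply (RInt_gen_le f f_ge0 f_int 2 RInt_0_le_2 2 0); [lra|].
  intros b hb. apply RInt_0_le_2. lra.
Qed.

Lemma RInt_gen_ge_twice_at (p : R) : 0 < p ->
  2 * p * f p <= RInt_gen f (at_point 0) (Rbar_locally p_infty).
Proof.
  intros hp. set (k := p ^ 2 * f p).
  assert (hk : 0 <= k) by (apply Rmult_le_pos; [apply pow_le; lra | auto]).
  apply (Rle_of_sub_div_le _ k _ p hp hk). intros b hb.
  eapply Rle_trans; [|apply (RInt_le_RInt_gen f f_ge0 f_int 2 RInt_0_le_2 b); lra].
  rewrite (RInt_split 0 p b) by lra.
  assert ((p - 0) * f p <= RInt f 0 p).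
  { apply (RInt_ge_is_RInt f (fun _ => f p)); [lra | apply ex_RInt_sub; lra | exact (is_RInt_const 0 p (f p)) |].
    intros y hy. apply f_nonincr; lra. }
  assert (k / p - k / b <= RInt f p b).
  { apply (RInt_ge_is_RInt f (fun y => k / y ^ 2));
      [lra | apply ex_RInt_sub; lra | apply is_RInt_inv_sqr; lra |].
    intros y hy. assert (hy2 : 0 < y ^ 2) by (apply pow_lt; lra).
    apply Rmult_le_reg_r with (y ^ 2); [lra|].
    unfold Rdiv. rewrite Rmult_assoc, Rinv_l, Rmult_1_r by lra.
    rewrite Rmult_comm. apply sqr_mul_nondecr; lra. }
  assert (k / p = p * f p) by (unfold k; field; lra).
  lra.
Qed.

Lemma RInt_0_le_profile (x t b : R) : 0 < t -> t <= 1 -> t <= x ->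
  t * t = x ^ 2 * f x -> x / t <= b ->
  RInt f 0 b <= 2 * t + 2 * t / x - 2 * t * t / x.
Proof.
  intros ht0 ht1 htx htt hb. set (d := x ^ 2 * f x) in htt. set (u := x / t) in hb.
  assert (hux : x <= u).
  { unfold u. apply Rmult_le_reg_r with t; [lra|].
    unfold Rdiv. rewrite Rmult_assoc, Rinv_l by lra. nra. }
  rewrite (RInt_split 0 t b), (RInt_split t x b), (RInt_split x u b) by lra.
  assert (RInt f 0 t <= (t - 0) * 1).
  { apply (RInt_le_is_RInt f (fun _ => 1));
      [lra | apply ex_RInt_sub; lra | exact (is_RInt_const 0 t 1) |].
    intros y hy. apply f_le1; lra. }
  assert (RInt f t x <= d / t - d / x).
  { apply (RInt_le_is_RInt f (fun y => d / y ^ 2));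
      [lra | apply ex_RInt_sub; lra | apply is_RInt_inv_sqr; lra |].
    intros y hy. assert (hy2 : 0 < y ^ 2) by (apply pow_lt; lra).
    apply Rmult_le_reg_r with (y ^ 2); [lra|].
    unfold Rdiv. rewrite Rmult_assoc, Rinv_l, Rmult_1_r by lra.
    rewrite Rmult_comm. apply sqr_mul_nondecr; lra. }
  assert (RInt f x u <= (u - x) * f x).
  { apply (RInt_le_is_RInt f (fun _ => f x));
      [lra | apply ex_RInt_sub; lra | exact (is_RInt_const x u (f x)) |].
    intros y hy. apply f_nonincr; lra. }
  assert (RInt f u b <= 1 / u - 1 / b).
  { apply (RInt_le_is_RInt f (fun y => 1 / y ^ 2));
      [lra | apply ex_RInt_sub; lra | apply is_RInt_inv_sqr; lra |].
    intros y hy. apply f_le_inv_sqr. lra. }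
  assert (0 < 1 / b) by (apply Rdiv_lt_0_compat; lra).
  assert ((t - 0) * 1 + (d / t - d / x) + (u - x) * f x + 1 / u
          = 2 * t + 2 * t / x - 2 * t * t / x).
  { replace (f x) with (d / x ^ 2) by (unfold d; field; lra).
    unfold u. rewrite <- htt. field. lra. }
  lra.
Qed.

Lemma RInt_gen_le_sqrt_at (x : R) : 0 < x -> 0 < f x ->
  RInt_gen f (at_point 0) (Rbar_locally p_infty) <= 2 * (x + 1) / x * sqrt (x ^ 2 * f x).
Proof.
  intros hx hfx. set (d := x ^ 2 * f x). set (t := sqrt d).
  assert (hx2 : 0 < x ^ 2) by (apply pow_lt; lra).
  assert (hd0 : 0 < d) by (apply Rmult_lt_0_compat; lra).
  assert (hdx : d <= x ^ 2) by (pose proof (f_le1 x hx); unfold d; nra).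
  assert (hd1 : d <= 1).
  { pose proof (f_le_inv_sqr x hx). unfold d.
    apply Rle_trans with (x ^ 2 * (1 / x ^ 2)); [nra | field_simplify; lra]. }
  assert (ht0 : 0 < t) by (apply sqrt_lt_R0; lra).
  assert (htt : t * t = d) by (apply sqrt_sqrt; lra).
  assert (htx : t <= x) by nra.
  assert (ht1 : t <= 1) by nra.
  apply Rle_trans with (2 * t + 2 * t / x - 2 * t * t / x).
  - apply (RInt_gen_le f f_ge0 f_int 2 RInt_0_le_2 _ (x / t)).
    + apply Rdiv_le_0_compat; lra.
    + intros b hb. exact (RInt_0_le_profile x t b ht0 ht1 htx htt hb).
  - assert (0 <= 2 * t * t / x) by (apply Rdiv_le_0_compat; nra).
    replace (2 * (x + 1) / x * t) with (2 * t + 2 * t / x) by (field; lra). lra.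
Qed.

End MonotoneProfile.

Definition sqrt_convex (w : R -> R) : Prop :=
  forall s t l, 0 <= s -> 0 <= t -> 0 <= l <= 1 ->
    w (sqrt (l * s + (1 - l) * t)) <= l * w (sqrt s) + (1 - l) * w (sqrt t).

Definition r_integrand (w : R -> R) (y : R) : R := (w 0 - w y) / y ^ 2.

Lemma sqr_mul_r_integrand (w : R -> R) (y : R) : y <> 0 ->
  y ^ 2 * r_integrand w y = w 0 - w y.
Proof. intros hy. unfold r_integrand. field. exact hy. Qed.

Lemma sqrt_convex_chord (w : R -> R) (p q : R) : sqrt_convex w -> 0 < p -> 0 <= q <= p ->
  w q <= (q / p) ^ 2 * w p + (1 - (q / p) ^ 2) * w 0.
Proof.
  intros Hcvx hp hq.
  assert (hl : 0 <= (q / p) ^ 2 <= 1).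
  { assert (0 <= q / p) by (apply Rdiv_le_0_compat; lra).
    assert (q / p * p = q) by (field; lra).
    split; [apply pow2_ge_0 | nra]. }
  pose proof (Hcvx (p ^ 2) 0 ((q / p) ^ 2) ltac:(nra) ltac:(lra) hl) as H.
  replace ((q / p) ^ 2 * p ^ 2 + (1 - (q / p) ^ 2) * 0) with (q ^ 2) in H by (field; lra).
  rewrite !sqrt_pow2, sqrt_0 in H by lra. exact H.
Qed.

Lemma r_integrand_nonincr (w : R -> R) : sqrt_convex w ->
  forall y1 y2, 0 < y1 -> y1 <= y2 -> r_integrand w y2 <= r_integrand w y1.
Proof.
  intros Hcvx y1 y2 h1 h2.
  pose proof (sqrt_convex_chord w y2 y1 Hcvx ltac:(lra) ltac:(lra)) as H.
  unfold r_integrand.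
  assert (E : (w 0 - w y1) / y1 ^ 2 - (w 0 - w y2) / y2 ^ 2 =
              ((w 0 - w y1) - (y1 / y2) ^ 2 * (w 0 - w y2)) / y1 ^ 2) by (field; lra).
  enough (0 <= ((w 0 - w y1) - (y1 / y2) ^ 2 * (w 0 - w y2)) / y1 ^ 2) by lra.
  apply Rdiv_le_0_compat; [lra | apply pow_lt; lra].
Qed.

Lemma r_integrand_sqr_mul_nondecr (w : R -> R) :
  (forall x y, 0 <= x -> x <= y -> w y <= w x) ->
  forall y1 y2, 0 < y1 -> y1 <= y2 ->
    y1 ^ 2 * r_integrand w y1 <= y2 ^ 2 * r_integrand w y2.
Proof.
  intros Hmon y1 y2 h1 h2.
  rewrite !sqr_mul_r_integrand by lra. pose proof (Hmon y1 y2). lra.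
Qed.

Lemma r_integrand_bounds (w : R -> R) : w 0 = 1 ->
  (forall x, Rmax 0 (1 - x ^ 2) <= w x /\ w x <= 1) ->
  forall y, 0 < y ->
    0 <= r_integrand w y /\ r_integrand w y <= 1 /\ r_integrand w y <= 1 / y ^ 2.
Proof.
  intros H0 Hb y hy. unfold r_integrand. rewrite H0.
  destruct (Hb y) as [h1 h2].
  pose proof (Rmax_l 0 (1 - y ^ 2)). pose proof (Rmax_r 0 (1 - y ^ 2)).
  assert (hp : 0 < y ^ 2) by (apply pow_lt; lra).
  repeat split.
  - apply Rdiv_le_0_compat; lra.
  - apply Rmult_le_reg_r with (y ^ 2); [lra|]. field_simplify; lra.
  - apply Rmult_le_reg_r with (y ^ 2); [lra|]. field_simplify; lra.
Qed.

Lemma r_integrand_continuous (w : R -> R) : (forall x, continuity_pt w x) ->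
  forall y, 0 < y -> continuous (r_integrand w) y.
Proof.
  intros Hc y hy. apply continuity_pt_filterlim, continuity_pt_div.
  - apply continuity_pt_minus; [apply continuity_pt_const; intros ? ?; reflexivity | apply Hc].
  - apply derivable_continuous_pt, derivable_pt_pow.
  - apply pow_nonzero; lra.
Qed.

Lemma r_integrand_ge_left_deriv (w : R -> R) (p L : R) : sqrt_convex w ->
  0 < p -> w p <= w 0 ->
  filterlim (fun h => (w p - w (p - h)) / h) (at_right 0) (locally L) ->
  - L <= 2 * p * r_integrand w p.
Proof.
  intros Hcvx hp hwp HL. set (c := - (2 * p * r_integrand w p)).
  enough (c <= L) by (unfold c in *; lra).
  apply (filterlim_le (F := at_right 0) (fun _ => c) (fun h => (w p - w (p - h)) / h) c L); [| apply filterlim_const | exact HL].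
  exists (mkposreal p hp). intros h hb hpos. apply (proj1 (ball_Rabs _ _ _)) in hb. simpl in hb.
  rewrite Rminus_0_r in hb. pose proof (Rle_abs h).
  pose proof (sqrt_convex_chord w p (p - h) Hcvx hp ltac:(lra)) as Hchord.
  assert (Hf : p ^ 2 * r_integrand w p = w 0 - w p) by (apply sqr_mul_r_integrand; lra).
  assert (El : 1 - ((p - h) / p) ^ 2 = h * (2 * p - h) / p ^ 2) by (field; lra).
  apply Rmult_le_reg_r with h; [lra|].
  replace ((w p - w (p - h)) / h * h) with (w p - w (p - h)) by (field; lra).
  assert (w p - w (p - h) >= - (h * (2 * p - h) * r_integrand w p)).
  { replace (- (h * (2 * p - h) * r_integrand w p)) with
      ((1 - ((p - h) / p) ^ 2) * (w p - w 0)) by (rewrite El; replace (w p - w 0) with (- (p ^ 2 * r_integrand w p)) by lra; field; lra).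
    lra. }
  assert (0 <= r_integrand w p) by (unfold r_integrand; apply Rdiv_le_0_compat; [lra | apply pow_lt; lra]).
  unfold c. nra.
Qed.

Lemma eta_pos (a : R) : 0 < eta a.
Proof.
  unfold eta. apply Rinv_0_lt_compat, Rmult_lt_0_compat; [apply exp_pos |].
  apply pow_lt. pose proof (Rabs_pos a). lra.
Qed.

Lemma RInt_gen_r_integrand_bounds (a : R) (w : R -> R) (x : R) : in_D a w -> 0 < x ->
  let I := RInt_gen (r_integrand w) (at_point 0) (Rbar_locally p_infty) in
  eta a <= I /\ I <= 2 * (x + 1) / x * sqrt (1 - w x) /\ I <= 2.
Proof.
  intros hw hx I.
  destruct hw as [Hc [_ [_ [H0 [Hb [Hmon [Hcvx [L [HL HLeta]]]]]]]]].
  set (f := r_integrand w) in I.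
  assert (Hf := r_integrand_bounds w H0 Hb).
  assert (f_ge0 : forall y, 0 < y -> 0 <= f y) by apply Hf.
  assert (f_le1 : forall y, 0 < y -> f y <= 1) by apply Hf.
  assert (f_le_inv_sqr : forall y, 0 < y -> f y <= 1 / y ^ 2) by apply Hf.
  assert (f_nonincr := r_integrand_nonincr w Hcvx).
  assert (sqr_mul_nondecr := r_integrand_sqr_mul_nondecr w Hmon).
  assert (f_int : forall b, 0 <= b -> ex_RInt f 0 b)
    by exact (ex_RInt_nonincr f 1 (r_integrand_continuous w Hc) f_nonincr f_le1).
  assert (Heta : eta a <= f (/2)).
  { assert (Hw2 : w (/2) <= w 0) by (rewrite H0; apply Hb).
    pose proof (r_integrand_ge_left_deriv w (/2) L Hcvx ltac:(lra) Hw2 HL) as Hderiv.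
    fold f in Hderiv. lra. }
  assert (hfx : 0 < f x)
    by exact (pos_of_pos_at f f_nonincr sqr_mul_nondecr (/2) x ltac:(lra)
                (Rlt_le_trans _ _ _ (eta_pos a) Heta) hx).
  split; [|split].
  - replace (f (/2)) with (2 * / 2 * f (/2)) in Heta by field.
    pose proof (RInt_gen_ge_twice_at f f_ge0 f_le1 f_le_inv_sqr f_nonincr sqr_mul_nondecr
                  f_int (/2) ltac:(lra)). unfold I. lra.
  - replace (1 - w x) with (x ^ 2 * f x) by (unfold f; rewrite sqr_mul_r_integrand, H0; lra).
    exact (RInt_gen_le_sqrt_at f f_ge0 f_le1 f_le_inv_sqr f_nonincr sqr_mul_nondecr
             f_int x hx hfx).
  - exact (RInt_gen_le_2 f f_ge0 f_le1 f_le_inv_sqr f_int).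
Qed.

Theorem mainTheorem7 (a : R) (w : R -> R) (ha : a < 1) (hw : in_D a w) :
  forall x : R, 0 < x ->
    eta a / PI <= r w /\
    r w <= Rmin (2 * (x + 1) / (PI * x) * sqrt (1 - w x)) (2 / PI).
Proof.
  intros x hx.
  destruct (RInt_gen_r_integrand_bounds a w x hw hx) as [Hlow [Hup H2]].
  set (I := RInt_gen (r_integrand w) (at_point 0) (Rbar_locally p_infty)) in *.
  assert (hPI : 0 < / PI) by (apply Rinv_0_lt_compat, PI_RGT_0).
  change (r w) with (/ PI * I). split; [|apply Rmin_glb].
  - unfold Rdiv. rewrite Rmult_comm. apply Rmult_le_compat_l; lra.
  - replace (2 * (x + 1) / (PI * x) * sqrt (1 - w x))
      with (/ PI * (2 * (x + 1) / x * sqrt (1 - w x))) by (field; split; [lra | apply PI_neq0]).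
    apply Rmult_le_compat_l; lra.
  - unfold Rdiv. rewrite (Rmult_comm 2). apply Rmult_le_compat_l; lra.
Qed.
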